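(* Let $0<p<1$. Let $X_1,X_2,\ldots$ be i.i.d. random variables with values in $\{0,1,a\}$ such that $P(X_1=a)=p$ and $P(X_1=0)=P(X_1=1)=\frac{1-p}{2}$. Let $Y_1,Y_2,\ldots$ be i.i.d. Bernoulli random variables with parameter $1/2$ (values in $\{0,1\}$), independent of $(X_i)_{i\in\mathbb{N}}$. Let $L_n$ be the length of a longest common subsequence of $X_1X_2\ldots X_n$ and $Y_1Y_2\ldots Y_n$. Then there exists a constant $k>0$, not depending on $n$, such that for all $n\in\mathbb{N}$, $$\mathrm{Var}[L_n]\geq k\cdot n.$$
   Context: A common subsequence of two finite words is a word that is a subsequence (not necessarily contiguous) of both. *)

From HB Require Import structures.
From mathcomp Require Import all_boot all_order all_algebra.
From mathcomp Require Import reals.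
Set Implicit Arguments. Unset Strict Implicit. Unset Printing Implicit Defensive.
Import Order.TTheory GRing.Theory Num.Theory.
Local Open Scope ring_scope.

(* Alphabet {0, 1, a} encoded as 'I_3 : ordinal 0 = letter 0, ordinal 1 =
   letter 1, ordinal 2 = letter a. *)
Definition sym := 'I_3.
Definition sym_a : sym := inord 2.
Definition sym_of_bool (b : bool) : sym := inord (nat_of_bool b).

(* Length of a longest common subsequence of s and t: the maximum length of a
   word u that is a subsequence of both.  Every subsequence of s is
   [mask m s] for some bit mask m of length size s. *)
Definition lcs (s t : seq sym) : nat :=
  \max_(m : (size s).-tuple bool | subseq (mask m s) t) size (mask m s).

Definition word_X n (x : {ffun 'I_n -> sym}) : seq sym := [seq x i | i <- enum 'I_n].
Definition word_Y n (y : {ffun 'I_n -> bool}) : seq sym :=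
  [seq sym_of_bool (y i) | i <- enum 'I_n].

Definition omega (n : nat) : finType := ({ffun 'I_n -> sym} * {ffun 'I_n -> bool})%type.

Definition pX {R : realType} (p : R) (c : sym) : R :=
  if c == sym_a then p else (1 - p) / 2.

Definition weight {R : realType} (p : R) (n : nat)
    (w : omega n) : R :=
  (\prod_(i < n) pX p (w.1 i)) * (\prod_(i < n) (1 / 2 : R)).

Definition Ln (n : nat) (w : omega n) : nat :=
  lcs (word_X w.1) (word_Y w.2).

Definition expect {R : realType} (p : R) (n : nat)
    (f : omega n -> R) : R :=
  \sum_w weight p w * f w.

Definition var_Ln {R : realType} (p : R) (n : nat) : R :=
  expect p (fun w : omega n => ((Ln w)%:R - expect p (fun w' : omega n => (Ln w')%:R)) ^+ 2).

From HB Require Import structures.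
From mathcomp Require Import all_boot all_order all_algebra.
From mathcomp Require Import reals.
From mathcomp Require Import ring lra.
Set Implicit Arguments. Unset Strict Implicit. Unset Printing Implicit Defensive.

(* Let M be the number of letters of X other than a.  Deleting the a's from X
   leaves, given M = m, a uniform binary word of length m, whose LCS with Y is
   L_n; hence E[L_n | M = m] = f(m), the mean LCS of independent uniform binary
   words of lengths m and n.  Prepending a fair bit to the first word raises f
   by at least (1 - m/n)/2: the bit matches the first letter of Y with
   probability 1/2, and dropping that letter of Y costs at most m/n, because the
   mean LCS of a fixed word b with a uniform word of length t is concave in t
   (a Monge property of LCS) and bounded by |b|.  As M ~ Bin(n, 1 - p), Stein's
   identity gives Cov(L_n, M) = n p (1 - p) E[f(M' + 1) - f(M')] >= n p^2 (1 - p)/2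
   with M' ~ Bin(n - 1, 1 - p), while Var M = n p (1 - p).  Finally
   Var L_n >= 2 t Cov(L_n, M) - t^2 Var M, and t = p/2 yields
   Var L_n >= p^3 (1 - p) n / 4. *)

Section LongestCommonSubsequence.
Variable T : eqType.
Implicit Types (x c : T) (s t u A V W Z : seq T).

Definition after x t := drop (index x t).+1 t.

Definition lcs_match x (rec : seq T -> nat) t :=
  if x \in t then (rec (after x t)).+1 else 0.

(* Either the head [x] of [s] is left unmatched, or it is matched with the
   first occurrence of [x] in [t]; matching greedily loses nothing. *)
Fixpoint lcs_rec s t : nat :=
  if s is x :: s' then maxn (lcs_rec s' t) (lcs_match x (lcs_rec s') t) else 0.

Lemma subseq_after x u t : subseq (x :: u) t -> subseq u (after x t).
Proof.
elim: t => [|y t IHt] //=; rewrite /after /= eq_sym.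
by case: eqP => [_|_]; [rewrite drop0 | move/IHt].
Qed.

Lemma after_cat x Z W :
  after x (Z ++ W) = if x \in Z then after x Z ++ W else after x W.
Proof.
rewrite /after index_cat; case: ifP => xZ; last first.
  by rewrite -addnS drop_cat ltnNge leq_addr /= addKn.
rewrite drop_cat; case: ltnP => // le_Z.
have {le_Z} eZ : (index x Z).+1 = size Z by apply/eqP; rewrite eqn_leq index_mem xZ.
by rewrite eZ subnn drop0 drop_oversize ?eZ.
Qed.

Lemma lcs_rec_max s t u : subseq u s -> subseq u t -> size u <= lcs_rec s t.
Proof.
elim: s t u => [|x s IHs] t [|z u] //=.
rewrite /lcs_match leq_max; case: (z =P x) => [-> su xut|_ zus zut].
  by rewrite (mem_subseq xut) ?mem_head // ltnS (IHs _ _ su (subseq_after xut)) orbT.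
by rewrite (IHs _ (z :: u)).
Qed.

Lemma lcs_recP s t : exists u, [/\ subseq u s, subseq u t & size u = lcs_rec s t].
Proof.
elim: s t => [|x s IHs] t; first by exists [::]; rewrite !sub0seq.
rewrite [lcs_rec _ _]/= /lcs_match; case: (leqP (if x \in t then _ else 0)) => [le_m|].
  have [u [us ut eu]] := IHs t.
  by exists u; rewrite ut eu (subseq_trans us (subseq_cons _ _)).
case: ifPn => // xt lt_m; have [u [us ut eu]] := IHs (after x t).
exists (x :: u); split=> /=; [by rewrite eqxx | | by rewrite eu].
rewrite -(cat_take_drop (index x t) t) (drop_nth x) ?index_mem // nth_index //.
by apply: subseq_trans (suffix_subseq _ _); rewrite /= eqxx.
Qed.

Lemma lcs_rec_size s t : lcs_rec s t <= size s.
Proof. by have [u [us _ <-]] := lcs_recP s t; apply: size_subseq. Qed.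

Lemma lcs_rec_subseqr s t1 t2 : subseq t1 t2 -> lcs_rec s t1 <= lcs_rec s t2.
Proof.
by move=> t12; have [u [us ut <-]] := lcs_recP s t1; apply: lcs_rec_max (subseq_trans ut t12).
Qed.

Lemma lcs_rec_consl x s t : lcs_rec s t <= lcs_rec (x :: s) t.
Proof. exact: leq_maxl. Qed.

Lemma lcs_rec_match x s t : lcs_match x (lcs_rec s) t <= lcs_rec (x :: s) t.
Proof. exact: leq_maxr. Qed.

Lemma lcs_rec_cons x s t : (lcs_rec s t).+1 <= lcs_rec (x :: s) (x :: t).
Proof.
by apply: leq_trans (lcs_rec_match _ _ _); rewrite /lcs_match mem_head /after /= eqxx drop0.
Qed.

Lemma lcs_rec_nilr s : lcs_rec s [::] = 0.
Proof. by elim: s => //= x s ->. Qed.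

Lemma lcs_rec_filter_notin a s t :
  a \notin t -> lcs_rec [seq x <- s | x != a] t = lcs_rec s t.
Proof.
elim: s t => [|x s IHs] t //= at_; case: (x =P a) => [->|_] /=.
  by rewrite /lcs_match (negbTE at_) maxn0 IHs.
by rewrite /lcs_match !IHs //; apply: contra at_; apply: mem_drop.
Qed.

(* Induction step on [A]: each of the two left-hand terms either skips [x]
   or matches it, and the four combinations are bounded separately. *)
Section MongeStep.
Variables (x : T) (A Z V : seq T) (c : T).
Hypothesis IH : forall Z V c,
  lcs_rec A (Z ++ V ++ [:: c]) + lcs_rec A V <= lcs_rec A (V ++ [:: c]) + lcs_rec A (Z ++ V).

Let m := lcs_match x (lcs_rec A).
Let R1 := lcs_rec (x :: A) (V ++ [:: c]).
Let R2 := lcs_rec (x :: A) (Z ++ V).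

Let m_cat_in W1 W2 : x \in W1 -> m (W1 ++ W2) = (lcs_rec A (after x W1 ++ W2)).+1.
Proof. by move=> xW1; rewrite /m /lcs_match mem_cat xW1 after_cat xW1. Qed.

Let m_cat_notin W1 W2 : x \notin W1 -> m (W1 ++ W2) = m W2.
Proof. by move=> /negbTE xW1; rewrite /m /lcs_match mem_cat xW1 after_cat xW1. Qed.

Let IH_after Z' : lcs_rec A (Z' ++ V ++ [:: c]) + lcs_rec A (after x V)
                  <= lcs_rec A (after x V ++ [:: c]) + lcs_rec A (Z' ++ V).
Proof.
have eV : take (index x V).+1 V ++ after x V = V := cat_take_drop _ _.
by have := IH (Z' ++ take (index x V).+1 V) (after x V) c; rewrite -!catA (catA (take _ _)) eV.
Qed.

Let skip_skip : lcs_rec A (Z ++ V ++ [:: c]) + lcs_rec A V <= R1 + R2.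
Proof. exact: leq_trans (IH Z V c) (leq_add (lcs_rec_consl _ _ _) (lcs_rec_consl _ _ _)). Qed.

Let skip_match : lcs_rec A (Z ++ V ++ [:: c]) + m V <= R1 + R2.
Proof.
rewrite /m /lcs_match; case: ifPn => xV; last by rewrite addn0 (leq_trans _ skip_skip) ?leq_addr.
rewrite addnS; apply: leq_trans (leq_add (lcs_rec_match x A _) (lcs_rec_consl x A _)).
by rewrite -/(m _) m_cat_in // addSn ltnS IH_after.
Qed.

Let match_skip : m (Z ++ V ++ [:: c]) + lcs_rec A V <= R1 + R2.
Proof.
have leV : lcs_rec A V <= R2.
  exact: leq_trans (lcs_rec_subseqr _ (suffix_subseq Z V)) (lcs_rec_consl _ _ _).
have [xZ|xZ] := boolP (x \in Z).
  rewrite m_cat_in // addSn addnC -addnS.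
  apply: leq_trans (leq_add (lcs_rec_consl x A _) (lcs_rec_match x A (Z ++ V))).
  by rewrite -/(m _) m_cat_in // !addnS ltnS addnC IH.
by rewrite m_cat_notin //; apply: leq_add => //; apply: lcs_rec_match.
Qed.

Let match_match : m (Z ++ V ++ [:: c]) + m V <= R1 + R2.
Proof.
rewrite {2}/m /lcs_match; case: ifPn => xV; last first.
  by rewrite addn0 (leq_trans _ match_skip) ?leq_addr.
rewrite -/(m _); have [xZ|xZ] := boolP (x \in Z).
  apply: leq_trans (leq_add (lcs_rec_match x A _) (lcs_rec_match x A (Z ++ V))).
  by rewrite -!/(m _) !m_cat_in // !addSn !addnS !ltnS IH_after.
rewrite m_cat_notin //; apply: leq_add; first exact: lcs_rec_match.
by apply: leq_trans (lcs_rec_match x A (Z ++ V)); rewrite -/(m _) m_cat_notin // /m /lcs_match xV.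
Qed.

Lemma lcs_rec_monge_step :
  lcs_rec (x :: A) (Z ++ V ++ [:: c]) + lcs_rec (x :: A) V <= R1 + R2.
Proof.
rewrite [lcs_rec (x :: A) _]/= [lcs_rec (x :: A) V]/= -!/(m _); clearbody R1 R2.
by rewrite addn_maxl !addn_maxr !geq_max skip_skip skip_match match_skip match_match.
Qed.

End MongeStep.

Lemma lcs_rec_monge A Z V c :
  lcs_rec A (Z ++ V ++ [:: c]) + lcs_rec A V <= lcs_rec A (V ++ [:: c]) + lcs_rec A (Z ++ V).
Proof. by elim: A Z V c => [|x A IHA] Z V c //; apply: lcs_rec_monge_step. Qed.

End LongestCommonSubsequence.

Lemma lcs_rec_map (T T' : eqType) (g : T -> T') s t :
  injective g -> lcs_rec (map g s) (map g t) = lcs_rec s t.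
Proof.
move=> g_inj; elim: s t => [|x s IHs] t //=.
rewrite /lcs_match mem_map // /after index_map // -map_drop.
by rewrite !IHs.
Qed.

Import Order.TTheory GRing.Theory Num.Theory.
Local Open Scope ring_scope.

Section WordExpectation.
Variables (R : numDomainType) (T : finType) (mu : T -> R).
Implicit Types (phi psi : seq T -> R) (n : nat).

Fixpoint wordE n phi : R :=
  if n is n'.+1 then \sum_x mu x * wordE n' (fun w => phi (x :: w)) else phi [::].

Lemma wordE_ext n phi psi :
  (forall w, size w = n -> phi w = psi w) -> wordE n phi = wordE n psi.
Proof.
elim: n phi psi => [|n IHn] phi psi eq_phi /=; first exact: eq_phi.
by apply: eq_bigr => x _; congr (_ * _); apply: IHn => w sw; apply: eq_phi; rewrite /= sw.
Qed.

Lemma wordE_add n phi psi : wordE n (fun w => phi w + psi w) = wordE n phi + wordE n psi.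
Proof.
elim: n phi psi => [|n IHn] phi psi //=.
by rewrite -big_split; apply: eq_bigr => x _; rewrite IHn mulrDr.
Qed.

Lemma wordE_scale n a phi : wordE n (fun w => a * phi w) = a * wordE n phi.
Proof.
elim: n phi => [|n IHn] phi //=.
by rewrite mulr_sumr; apply: eq_bigr => x _; rewrite IHn mulrCA.
Qed.

Lemma wordE_sum (I : finType) n (F : I -> seq T -> R) :
  wordE n (fun w => \sum_i F i w) = \sum_i wordE n (F i).
Proof.
elim: n F => [|n IHn] F //=.
by rewrite exchange_big; apply: eq_bigr => x _; rewrite IHn mulr_sumr.
Qed.

Definition ffun_cons n (x : T) (g : {ffun 'I_n -> T}) : {ffun 'I_n.+1 -> T} :=
  [ffun i => if unlift ord0 i is Some j then g j else x].

Lemma ffun_cons0 n x (g : {ffun 'I_n -> T}) : ffun_cons x g ord0 = x.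
Proof. by rewrite ffunE unlift_none. Qed.

Lemma ffun_consS n x (g : {ffun 'I_n -> T}) j : ffun_cons x g (lift ord0 j) = g j.
Proof. by rewrite ffunE liftK. Qed.

Lemma sum_ffunS n (F : {ffun 'I_n.+1 -> T} -> R) :
  \sum_f F f = \sum_x \sum_(g : {ffun 'I_n -> T}) F (ffun_cons x g).
Proof.
rewrite pair_big (reindex (fun xg : T * {ffun 'I_n -> T} => ffun_cons xg.1 xg.2)) //=.
exists (fun f : {ffun 'I_n.+1 -> T} => (f ord0, [ffun j => f (lift ord0 j)])).
  move=> [x g] _ /=; rewrite ffun_cons0; congr (_, _).
  by apply/ffunP => j; rewrite ffunE ffun_consS.
move=> f _; apply/ffunP => i; rewrite ffunE.
by case: (unliftP ord0 i) => [j ->|->] //; rewrite ffunE.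
Qed.

Lemma sum_ffun_wordE n phi :
  \sum_(f : {ffun 'I_n -> T}) (\prod_(i < n) mu (f i)) * phi [seq f i | i <- enum 'I_n]
  = wordE n phi.
Proof.
elim: n phi => [|n IHn] phi.
  rewrite enum_ord0 /=; under eq_bigr do rewrite big_ord0 mul1r.
  by rewrite sumr_const card_ffun card_ord expn0.
rewrite sum_ffunS [RHS]/=; apply: eq_bigr => x _; rewrite -IHn mulr_sumr; apply: eq_bigr => g _.
rewrite big_ord_recl enum_ordSl /= ffun_cons0 -mulrA -map_comp.
by under eq_bigr do rewrite ffun_consS; under eq_map do rewrite /= ffun_consS.
Qed.

Section Probability.
Hypotheses (mu_ge0 : forall x, 0 <= mu x) (mu_sum1 : \sum_x mu x = 1).

Lemma wordE_le n phi psi :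
  (forall w, size w = n -> phi w <= psi w) -> wordE n phi <= wordE n psi.
Proof.
elim: n phi psi => [|n IHn] phi psi le_phi /=; first exact: le_phi.
apply: ler_sum => x _; rewrite ler_wpM2l //.
by apply: IHn => w sw; apply: le_phi; rewrite /= sw.
Qed.

Lemma wordE_const n a : wordE n (fun=> a) = a.
Proof.
elim: n => [|n IHn] //=.
by under eq_bigr do rewrite IHn; rewrite -mulr_suml mu_sum1 mul1r.
Qed.

Lemma wordE_affine n a b phi : wordE n (fun w => a * phi w + b) = a * wordE n phi + b.
Proof. by rewrite wordE_add wordE_scale wordE_const. Qed.

Lemma wordE_behead n phi : wordE n.+1 (fun w => phi (behead w)) = wordE n phi.
Proof. by rewrite /= -mulr_suml mu_sum1 mul1r. Qed.

Lemma wordE_rcons n phi :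
  wordE n.+1 phi = wordE n (fun w => \sum_x mu x * phi (rcons w x)).
Proof.
elim: n phi => [|n IHn] phi //.
have -> : wordE n.+2 phi = \sum_x mu x * wordE n.+1 (fun w => phi (x :: w)) by [].
by under eq_bigr do rewrite IHn.
Qed.

Lemma wordE_take n phi : wordE n.+1 (fun w => phi (take n w)) = wordE n phi.
Proof.
rewrite wordE_rcons; apply: wordE_ext => w sw.
by under eq_bigr do rewrite -cats1 take_size_cat //; rewrite -mulr_suml mu_sum1 mul1r.
Qed.

End Probability.
End WordExpectation.

Section Binomial.
Variable R : numDomainType.
Implicit Types (q : R) (h g : nat -> R) (n : nat).

Definition bernoulli q (b : bool) : R := if b then q else 1 - q.

Definition binomE q n h : R := wordE (bernoulli q) n (fun z => h (count id z)).

Lemma bernoulli_sum1 q : \sum_b bernoulli q b = 1.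
Proof. by rewrite big_bool /= addrC subrK. Qed.

Lemma binomE_S q n h :
  binomE q n.+1 h = (1 - q) * binomE q n h + q * binomE q n (fun m => h m.+1).
Proof. by rewrite /binomE /= big_bool addrC. Qed.

Lemma binomE_ext q n h g : (forall m, h m = g m) -> binomE q n h = binomE q n g.
Proof. by move=> eq_hg; apply: wordE_ext => z _; apply: eq_hg. Qed.

Lemma binomE_add q n h g : binomE q n (fun m => h m + g m) = binomE q n h + binomE q n g.
Proof. exact: wordE_add. Qed.

Lemma binomE_scale q n a h : binomE q n (fun m => a * h m) = a * binomE q n h.
Proof. exact: wordE_scale. Qed.

Lemma binomE_const q n a : binomE q n (fun=> a) = a.
Proof. exact/wordE_const/bernoulli_sum1. Qed.

Lemma binomE_le q n h g : 0 <= q <= 1 -> (forall m, h m <= g m) ->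
  binomE q n h <= binomE q n g.
Proof.
move=> /andP[q_ge0 q_le1] le_hg; apply: wordE_le => [[]|z _]; last exact: le_hg.
  exact: q_ge0.
by rewrite /= subr_ge0.
Qed.

Lemma binomE_mean q n : binomE q n (fun m => m%:R) = n%:R * q.
Proof.
elim: n => [|n IHn]; first by rewrite /binomE /= mul0r.
rewrite binomE_S IHn (@binomE_ext _ _ _ (fun m => m%:R + 1)); last by move=> m; rewrite natr1.
by rewrite binomE_add IHn binomE_const -natr1; ring.
Qed.

Lemma binomE_stein q n h :
  binomE q n.+1 (fun m => m%:R * h m) = n.+1%:R * q * binomE q n (fun m => h m.+1).
Proof.
elim: n h => [|n IHn] h.
  by rewrite binomE_S /binomE /= mul0r mulr0 add0r !mul1r.
rewrite binomE_S IHn (@binomE_ext _ _ (fun m => m.+1%:R * h m.+1)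
  (fun m => m%:R * h m.+1 + h m.+1)); last first.
  by move=> m; rewrite -natr1 mulrDl mul1r.
by rewrite binomE_add IHn !binomE_S -!natr1; ring.
Qed.

Lemma binomE_cov q n g :
  binomE q n.+1 (fun m => (m%:R - n.+1%:R * q) * g m)
  = n.+1%:R * q * (1 - q) * binomE q n (fun m => g m.+1 - g m).
Proof.
rewrite (@binomE_ext _ _ (fun m => (m%:R - n.+1%:R * q) * g m)
  (fun m => m%:R * g m + (- (n.+1%:R * q)) * g m)); last first.
  by move=> m; rewrite mulrDl.
rewrite (binomE_add _ n.+1) binomE_stein (binomE_scale _ n.+1) binomE_S.
rewrite (@binomE_ext _ _ (fun m => g m.+1 - g m) (fun m => g m.+1 + (-1) * g m)); last first.
  by move=> m; rewrite mulN1r.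
by rewrite binomE_add binomE_scale; ring.
Qed.

Lemma binomE_var q n :
  binomE q n.+1 (fun m => (m%:R - n.+1%:R * q) ^+ 2) = n.+1%:R * q * (1 - q).
Proof.
rewrite (@binomE_ext _ _ _ (fun m => (m%:R - n.+1%:R * q) * (m%:R - n.+1%:R * q))) //.
rewrite binomE_cov (@binomE_ext _ _ _ (fun=> 1)) ?binomE_const ?mulr1 // => m.
by rewrite -natr1; ring.
Qed.

End Binomial.

Lemma concave_increment_le (R : numDomainType) (g : nat -> R) :
  g 0%N = 0 -> (forall n, g n.+2 + g n <= g n.+1 + g n.+1) ->
  forall n, n.+1%:R * (g n.+1 - g n) <= g n.+1.
Proof.
move=> g0 g_concave; elim=> [|n IHn]; first by rewrite g0 subr0 mul1r.
have le_incr : g n.+2 - g n.+1 <= g n.+1 - g n.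
  by rewrite lerBlDr addrAC lerBrDr g_concave.
rewrite -natr1 mulrDl mul1r -[leRHS](subrK (g n.+1)) addrC lerD2l.
exact: le_trans (ler_wpM2l (ler0n _ _) le_incr) IHn.
Qed.

Section LcsAverage.
Variable R : realFieldType.
Implicit Types (b y : seq bool) (m n : nat).

Definition fair (c : bool) : R := 1 / 2.

Lemma fair_ge0 c : 0 <= fair c.
Proof. by rewrite /fair divr_ge0 ?ler01 ?ler0n. Qed.

Lemma sum_fair (F : bool -> R) : \sum_c fair c * F c = (F true + F false) / 2.
Proof. by rewrite big_bool /fair !mul1r mulrDl ![_ / 2]mulrC. Qed.

Lemma fair_sum1 : \sum_c fair c = 1.
Proof.
rewrite (eq_bigr (fun c => fair c * 1)) => [|c _]; last by rewrite mulr1.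
by rewrite sum_fair -mulr2n divff ?pnatr_eq0.
Qed.

Definition lcs_avg b n : R := wordE fair n (fun y => (lcs_rec b y)%:R).

Definition lcs_avg2 m n : R := wordE fair m (fun x => lcs_avg x n).

Lemma lcs_avg0 b : lcs_avg b 0 = 0.
Proof. by rewrite /lcs_avg /= lcs_rec_nilr. Qed.

Lemma lcs_avg_le_size b n : lcs_avg b n <= (size b)%:R.
Proof.
rewrite -[leRHS](wordE_const fair_sum1 n); apply: wordE_le => [|y _]; first exact: fair_ge0.
by rewrite ler_nat lcs_rec_size.
Qed.

Lemma lcs_avg_concave b n :
  lcs_avg b n.+2 + lcs_avg b n <= lcs_avg b n.+1 + lcs_avg b n.+1.
Proof.
have e_behead : lcs_avg b n.+1 = wordE fair n.+2 (fun y => (lcs_rec b (behead y))%:R).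
  by rewrite /lcs_avg -(wordE_behead fair_sum1 n.+1 (fun y => (lcs_rec b y)%:R)).
have e_take : lcs_avg b n.+1 = wordE fair n.+2 (fun y => (lcs_rec b (take n.+1 y))%:R).
  by rewrite /lcs_avg -(wordE_take fair_sum1 n.+1 (fun y => (lcs_rec b y)%:R)).
have e_both : lcs_avg b n = wordE fair n.+2 (fun y => (lcs_rec b (behead (take n.+1 y)))%:R).
  rewrite /lcs_avg -(wordE_behead fair_sum1 n (fun y => (lcs_rec b y)%:R)).
  by rewrite -(wordE_take fair_sum1 n.+1 (fun y => (lcs_rec b (behead y))%:R)).
rewrite {1}e_behead e_take e_both -!wordE_add; apply: wordE_le => [|y]; first exact: fair_ge0.
case: y => [|d y] //=; case/lastP: y => [|V c] //; rewrite size_rcons => -[sV].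
by rewrite -!natrD ler_nat -cats1 (take_size_cat _ sV) (lcs_rec_monge b [:: d]).
Qed.

Lemma lcs_avg_increment_le b n : lcs_avg b n.+1 - lcs_avg b n <= (size b)%:R / n.+1%:R.
Proof.
rewrite ler_pdivlMr ?ltr0n // mulrC.
exact: le_trans (concave_increment_le (lcs_avg0 b) (lcs_avg_concave b) n) (lcs_avg_le_size b n.+1).
Qed.

(* With probability 1/2 the prepended letter [c] equals [d] and extends a
   common subsequence of [b] and [y]; otherwise [c] is simply skipped. *)
Lemma fair_lcs_rec_cons b d y :
  ((lcs_rec b (d :: y))%:R + (lcs_rec b y).+1%:R) / 2
  <= \sum_c fair c * (lcs_rec (c :: b) (d :: y))%:R.
Proof.
have ge_skip c : (lcs_rec b (d :: y))%:R <= (lcs_rec (c :: b) (d :: y))%:R :> R.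
  by rewrite ler_nat lcs_rec_consl.
have ge_match : (lcs_rec b y).+1%:R <= (lcs_rec (d :: b) (d :: y))%:R :> R.
  by rewrite ler_nat lcs_rec_cons.
rewrite sum_fair; case: d ge_skip ge_match => ge_skip ge_match.
  by have := ge_skip false; lra.
by have := ge_skip true; lra.
Qed.

Lemma lcs_avg_cons b n :
  lcs_avg b n.+1 + (1 - (size b)%:R / n.+1%:R) / 2 <= \sum_c fair c * lcs_avg (c :: b) n.+1.
Proof.
have -> : \sum_c fair c * lcs_avg (c :: b) n.+1
          = wordE fair n.+1 (fun y => \sum_c fair c * (lcs_rec (c :: b) y)%:R).
  by rewrite wordE_sum; apply: eq_bigr => c _; rewrite wordE_scale.
have lb : wordE fair n.+1 (fun y => ((lcs_rec b y)%:R + (lcs_rec b (behead y)).+1%:R) / 2)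
          <= wordE fair n.+1 (fun y => \sum_c fair c * (lcs_rec (c :: b) y)%:R).
  apply: wordE_le => [|[|d y] //= _]; [exact: fair_ge0 | exact: fair_lcs_rec_cons].
apply: le_trans lb; rewrite (@wordE_ext _ _ _ _ _
  (fun y => 2^-1 * (lcs_rec b y)%:R + (2^-1 * (lcs_rec b (behead y))%:R + 2^-1))); last first.
  by move=> y _; rewrite -natr1; field.
rewrite wordE_add wordE_scale (wordE_affine fair_sum1).
rewrite (wordE_behead fair_sum1 n (fun y => (lcs_rec b y)%:R)).
have := lcs_avg_increment_le b n; rewrite /lcs_avg; set s := (size b)%:R / _; lra.
Qed.

Lemma lcs_avg2_increment m n :
  lcs_avg2 m n.+1 + (1 - m%:R / n.+1%:R) / 2 <= lcs_avg2 m.+1 n.+1.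
Proof.
have -> : lcs_avg2 m.+1 n.+1 = wordE fair m (fun x => \sum_c fair c * lcs_avg (c :: x) n.+1).
  by rewrite wordE_sum; apply: eq_bigr => c _; rewrite wordE_scale.
rewrite /lcs_avg2 -(wordE_const fair_sum1 m ((1 - m%:R / n.+1%:R) / 2)) -wordE_add.
by apply: wordE_le => [|x <-]; [exact: fair_ge0 | exact: lcs_avg_cons].
Qed.

End LcsAverage.

Arguments fair {R} c.
Arguments fair_ge0 {R} c.
Arguments fair_sum1 {R}.
Arguments lcs_avg {R} b n.
Arguments lcs_avg2 {R} m n.

Lemma lcsE (s t : seq sym) : lcs s t = lcs_rec s t.
Proof.
apply/eqP; rewrite eqn_leq; apply/andP; split.
  by apply/bigmax_leqP => m Hm; apply: lcs_rec_max Hm; apply: mask_subseq.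
have [u [/subseqP[m sm ->] ut <-]] := lcs_recP s t.
exact: (leq_bigmax_cond (P := fun m : (size s).-tuple bool => subseq (mask m s) t)
          (F := fun m => size (mask m s)) (Tuple (introT eqP sm)) ut).
Qed.

Notation sb := sym_of_bool.

Lemma val_sym_of_bool b : nat_of_ord (sb b) = b.
Proof. by rewrite inordK //; case: b. Qed.

Lemma sym_of_bool_inj : injective sb.
Proof. by move=> b1 b2 /(congr1 val); rewrite /= !val_sym_of_bool; case: b1; case: b2. Qed.

Lemma sym_of_bool_neq_a b : sb b != sym_a.
Proof. by apply/eqP => /(congr1 val); rewrite /= val_sym_of_bool inordK //; case: b. Qed.

Lemma sum_sym (V : nmodType) (F : sym -> V) :
  \sum_c F c = F (sb false) + F (sb true) + F sym_a.
Proof.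
rewrite /sym !big_ord_recl big_ord0 addr0 addrA.
by congr (F _ + F _ + F _); apply: val_inj; rewrite /= ?val_sym_of_bool ?inordK.
Qed.

Definition erase_a (s : seq sym) := [seq c <- s | c != sym_a].

Definition Mn n (w : omega n) : nat := size (erase_a (word_X w.1)).

Section Model.
Variables (R : realType) (p : R).

Lemma sum_pX (F : sym -> R) :
  \sum_c pX p c * F c = p * F sym_a + (1 - p) * \sum_b fair b * F (sb b).
Proof.
by rewrite sum_fair sum_sym /pX eqxx !(negbTE (sym_of_bool_neq_a _)); field.
Qed.

Lemma wordE_erase_a n (Psi : seq sym -> R) :
  wordE (pX p) n (fun s => Psi (erase_a s))
  = binomE (1 - p) n (fun m => wordE fair m (fun x => Psi (map sb x))).
Proof.
elim: n Psi => [|n IHn] Psi //.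
rewrite binomE_S subKr.
have -> : wordE (pX p) n.+1 (fun s => Psi (erase_a s))
          = p * wordE (pX p) n (fun s => Psi (erase_a s))
            + (1 - p) * wordE (pX p) n (fun s => \sum_b fair b * Psi (sb b :: erase_a s)).
  rewrite [LHS]/= sum_pX /erase_a /= eqxx wordE_sum; congr (_ + _ * _).
  by apply: eq_bigr => b _; rewrite sym_of_bool_neq_a wordE_scale.
rewrite IHn (IHn (fun b => \sum_c fair c * Psi (sb c :: b))).
congr (_ + _ * _); apply: binomE_ext => m /=.
by rewrite wordE_sum; apply: eq_bigr => b _; rewrite wordE_scale.
Qed.

Lemma expect_wordE n (H : seq sym -> seq bool -> R) :
  expect p (fun w : omega n => H (word_X w.1) [seq w.2 i | i <- enum 'I_n])
  = wordE (pX p) n (fun s => wordE fair n (H s)).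
Proof.
rewrite /expect; transitivity (\sum_x \sum_y
    weight p ((x, y) : omega n) * H (word_X x) [seq y i | i <- enum 'I_n]).
  by rewrite pair_bigA; apply: eq_bigr => -[x y].
rewrite -sum_ffun_wordE; apply: eq_bigr => x _.
rewrite -sum_ffun_wordE mulr_sumr; apply: eq_bigr => y _.
by rewrite /weight mulrA.
Qed.

Lemma Ln_erase_a n (w : omega n) :
  Ln w = lcs_rec (erase_a (word_X w.1)) (map sb [seq w.2 i | i <- enum 'I_n]).
Proof.
rewrite /Ln lcsE /word_Y (map_comp sb) lcs_rec_filter_notin //.
by apply/mapP => -[i _ /esym/eqP]; rewrite (negbTE (sym_of_bool_neq_a _)).
Qed.

Lemma expect_Mn_Ln n (H : nat -> nat -> R) :
  expect p (fun w : omega n => H (Mn w) (Ln w))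
  = binomE (1 - p) n (fun m => wordE fair m (fun x => wordE fair n (fun y => H m (lcs_rec x y)))).
Proof.
pose H' s y := H (size (erase_a s)) (lcs_rec (erase_a s) (map sb y)).
transitivity (expect p (fun w : omega n => H' (word_X w.1) [seq w.2 i | i <- enum 'I_n])).
  by apply: eq_bigr => w _; rewrite Ln_erase_a.
rewrite expect_wordE.
rewrite (wordE_erase_a n (fun b => wordE fair n (fun y => H (size b) (lcs_rec b (map sb y))))).
apply: binomE_ext => m; apply: wordE_ext => x sx; rewrite size_map sx.
by apply: wordE_ext => y _; rewrite lcs_rec_map //; apply: sym_of_bool_inj.
Qed.

Lemma expect_cov_Mn_Ln n a :
  expect p (fun w : omega n.+1 => ((Ln w)%:R - a) * ((Mn w)%:R - n.+1%:R * (1 - p)))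
  = n.+1%:R * (1 - p) * p * binomE (1 - p) n (fun m => lcs_avg2 m.+1 n.+1 - lcs_avg2 m n.+1).
Proof.
set e := n.+1%:R * (1 - p).
rewrite (expect_Mn_Ln _ (fun m l => (l%:R - a) * (m%:R - e))).
rewrite (@binomE_ext _ _ _ _ (fun m => (m%:R - e) * (lcs_avg2 m n.+1 - a))) => [|m].
  rewrite binomE_cov subKr; congr (_ * _); apply: binomE_ext => m; ring.
rewrite (@wordE_ext _ _ _ m _ (fun x => (m%:R - e) * lcs_avg x n.+1 + (- ((m%:R - e) * a)))).
  by rewrite (wordE_affine fair_sum1) -/(lcs_avg2 m n.+1); ring.
move=> x _; rewrite /lcs_avg -(wordE_affine fair_sum1); apply: wordE_ext => y _; ring.
Qed.

Lemma expect_var_Mn n :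
  expect p (fun w : omega n.+1 => ((Mn w)%:R - n.+1%:R * (1 - p)) ^+ 2) = n.+1%:R * (1 - p) * p.
Proof.
rewrite (expect_Mn_Ln _ (fun m _ => (m%:R - n.+1%:R * (1 - p)) ^+ 2)).
transitivity (binomE (1 - p) n.+1 (fun m => (m%:R - n.+1%:R * (1 - p)) ^+ 2)).
  by apply: binomE_ext => m; rewrite !(wordE_const fair_sum1).
by rewrite binomE_var subKr.
Qed.

Hypotheses (p_ge0 : 0 <= p) (p_le1 : p <= 1).

Lemma weight_ge0 n (w : omega n) : 0 <= weight p w.
Proof.
rewrite /weight; apply: mulr_ge0; apply: prodr_ge0 => i _; last exact: (fair_ge0 true).
by rewrite /pX; case: ifP => _ //; rewrite divr_ge0 ?ler0n ?subr_ge0.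
Qed.

Lemma var_Ln_ge0 n : 0 <= var_Ln p n.
Proof. by apply: sumr_ge0 => w _; rewrite mulr_ge0 ?weight_ge0 ?sqr_ge0. Qed.

Lemma expect_sq_ge n (U V : omega n -> R) t :
  2 * t * expect p (fun w => U w * V w) - t ^+ 2 * expect p (fun w => V w ^+ 2)
  <= expect p (fun w => U w ^+ 2).
Proof.
rewrite /expect !mulr_sumr -sumrB; apply: ler_sum => w _; rewrite -subr_ge0.
have -> : weight p w * U w ^+ 2
          - (2 * t * (weight p w * (U w * V w)) - t ^+ 2 * (weight p w * V w ^+ 2))
          = weight p w * (U w - t * V w) ^+ 2 by ring.
by rewrite mulr_ge0 ?weight_ge0 ?sqr_ge0.
Qed.

Lemma binomE_lcs_avg2_increment n :
  p / 2 <= binomE (1 - p) n (fun m => lcs_avg2 m.+1 n.+1 - lcs_avg2 m n.+1).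
Proof.
have q_ge0 : 0 <= 1 - p by rewrite subr_ge0.
apply: le_trans (_ : binomE (1 - p) n (fun m => (1 - m%:R / n.+1%:R) / 2) <= _); last first.
  apply: binomE_le => [|m]; first by rewrite q_ge0 lerBlDr lerDl.
  by rewrite lerBrDl lcs_avg2_increment.
have -> : binomE (1 - p) n (fun m => (1 - m%:R / n.+1%:R) / 2)
          = (1 - (1 - p) * (n%:R / n.+1%:R)) / 2.
  rewrite (@binomE_ext _ _ _ _ (fun m => 2^-1 + (- (2^-1 / n.+1%:R)) * m%:R)) => [|m].
    rewrite binomE_add binomE_const binomE_scale binomE_mean.
    by field; rewrite addrC natr1 pnatr_eq0.
  by field; rewrite addrC natr1 pnatr_eq0.
have ratio_le1 : n%:R / n.+1%:R <= 1 :> R by rewrite ler_pdivrMr ?ltr0n // mul1r ler_nat.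
have := ler_piMr q_ge0 ratio_le1; set r := n%:R / _; lra.
Qed.

End Model.

Theorem theorem1 (R : realType) (p : R) (hp0 : 0 < p) (hp1 : p < 1) :
  exists k : R, 0 < k /\ forall n : nat, var_Ln p n >= k * n%:R.
Proof.
have [p_ge0 p_le1] := (ltW hp0, ltW hp1).
exists (p ^+ 3 * (1 - p) / 4); split.
  by rewrite !mulr_gt0 ?exprn_gt0 ?subr_gt0 ?invr_gt0 ?ltr0n.
case=> [|n]; first by rewrite mulr0 var_Ln_ge0.
have := expect_sq_ge p_ge0 p_le1
  (fun w : omega n.+1 => (Ln w)%:R - expect p (fun w : omega n.+1 => (Ln w)%:R))
  (fun w => (Mn w)%:R - n.+1%:R * (1 - p)) (p / 2).
rewrite expect_cov_Mn_Ln expect_var_Mn -/(var_Ln p n.+1).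
have := binomE_lcs_avg2_increment p_ge0 p_le1 n.
set I := binomE _ _ _; set N := n.+1%:R.
have : 0 <= N * (1 - p) * p ^+ 2 by rewrite !mulr_ge0 ?ler0n ?subr_ge0 ?sqr_ge0.
nra.
Qed.
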